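(* Let $\Pi$ be any one of the six sets \[\{[\overline{123}],[\overline{132}]\},\ \{[\overline{123}],[\overline{213}]\},\ \{[\overline{321}],[\overline{231}]\},\ \{[\overline{321}],[\overline{312}]\},\ \{[\overline{132}],[\overline{231}]\},\ \{[\overline{213}],[\overline{312}]\}.\] Then $\left|\mathrm{Av}_n[\Pi]\right|=1$ for $n\le 2$ and $\left|\mathrm{Av}_n[\Pi]\right|=0$ for $n\ge 3$.
   Context: For $\sigma\in S_n$, the cyclic permutation $[\sigma]$ is the set of all rotations of $\sigma$; $[S_n]$ is the set of cyclic permutations of length $n$. A vincular pattern is a permutation $\pi\in S_k$ with some pairs of adjacent positions joined by an overline (vinculum); a linear permutation $\tau$ contains it if $\tau$ has a subsequence order-isomorphic to $\pi$ whose entries corresponding to positions joined by a vinculum are adjacent in $\tau$. A cyclic permutation $[\sigma]$ contains $[\pi]$ if some rotation of $\sigma$ contains $\pi$. A fully overlined pattern such as $[\overline{123}]$ thus requires three cyclically consecutive entries in the given relative order. $\mathrm{Av}_n[\Pi]$ is the set of $[\sigma]\in[S_n]$ avoiding every pattern in $\Pi$. *)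

From mathcomp Require Import all_boot all_order all_fingroup.
Set Implicit Arguments. Unset Strict Implicit. Unset Printing Implicit Defensive.



Definition cshift (n : nat) : 'S_n := perm (@ordS_inj n).

Definition oneline (n : nat) (s : 'S_n) : seq nat := [seq val (s i) | i <- enum 'I_n].

(* The cyclic permutation [s]: the set of all rotations of s.
   (cshift n ^+ k * s) i = s (i + k mod n), i.e. rotation of s left by k. *)
Definition cyc_class (n : nat) (s : 'S_n) : {set 'S_n} :=
  [set (cshift n ^+ k * s)%g | k : 'I_n.+1].

(* A linear sequence t contains the fully overlined (consecutive) pattern p
   (p given in one-line notation) if some factor of size p consecutive entries
   of t is order-isomorphic to p. *)
Definition contains_consec (t p : seq nat) : bool :=
  [exists i : 'I_(size t).+1, (i + size p <= size t) &&
    [forall a : 'I_(size p), forall b : 'I_(size p),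
      (nth 0 t (i + a) < nth 0 t (i + b)) == (nth 0 p a < nth 0 p b)]].

Definition cyc_contains (n : nat) (s : 'S_n) (p : seq nat) : bool :=
  [exists r in cyc_class s, contains_consec (oneline r) p].

Definition Av (n : nat) (Pi : seq (seq nat)) : {set {set 'S_n}} :=
  [set cyc_class s | s in [set s : 'S_n | all (fun p => ~~ cyc_contains s p) Pi]].

Definition six_sets : seq (seq (seq nat)) :=
  [:: [:: [:: 1; 2; 3]; [:: 1; 3; 2]];
      [:: [:: 1; 2; 3]; [:: 2; 1; 3]];
      [:: [:: 3; 2; 1]; [:: 2; 3; 1]];
      [:: [:: 3; 2; 1]; [:: 3; 1; 2]];
      [:: [:: 1; 3; 2]; [:: 2; 3; 1]];
      [:: [:: 2; 1; 3]; [:: 3; 1; 2]]].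

(** Rotating a cyclic permutation of length at least 3 we may move the
    minimum or the maximum to any of the first three positions.  In each of
    the six pattern pairs the two patterns share the position of such an
    extreme entry and differ only by the order of the two other entries, so
    the suitable rotation starts with an occurrence of one of the two
    patterns.  For length at most 2 no pattern of length 3 fits, and all
    permutations lie in a single cyclic class. *)

From mathcomp Require Import all_boot all_order all_fingroup.
From mathcomp Require Import zify.
Set Implicit Arguments. Unset Strict Implicit.

Lemma cshiftX n k (i : 'I_n) : val ((cshift n ^+ k)%g i) = (i + k) %% n.
Proof.
elim: k => [|k IHk]; first by rewrite expg0 perm1 addn0 modn_small.
by rewrite expgSr permM /cshift permE /= -/(cshift n) IHk -addn1 modnDml addn1 addnS.
Qed.

Lemma cyc_class_refl n (s : 'S_n) : s \in cyc_class s.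
Proof. by apply/imsetP; exists ord0; rewrite // expg0 mul1g. Qed.

Lemma cyc_class_rot n (s : 'S_n) (c x : 'I_n) :
  exists2 r, r \in cyc_class s & r c = x.
Proof.
pose j := (s^-1)%g x; pose k := (j + (n - c)) %% n.
have k_lt : k < n.+1 by rewrite ltnS ltnW // ltn_pmod // (leq_ltn_trans _ (ltn_ord c)).
exists (cshift n ^+ (Ordinal k_lt) * s)%g; first by apply/imsetP; exists (Ordinal k_lt).
have shift_c : (cshift n ^+ (Ordinal k_lt))%g c = j.
  apply: val_inj; rewrite cshiftX /= modnDmr.
  have -> : c + (j + (n - c)) = j + n by have := ltn_ord c; lia.
  by rewrite modnDr modn_small.
by rewrite permM shift_c permKV.
Qed.

Lemma size_oneline n (r : 'S_n) : size (oneline r) = n.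
Proof. by rewrite size_map size_enum_ord. Qed.

Lemma nth_oneline n (r : 'S_n) (i : 'I_n) : nth 0 (oneline r) i = val (r i).
Proof. by rewrite (nth_map i) ?size_enum_ord // nth_ord_enum. Qed.

Lemma contains_consec_size (t p : seq nat) :
  contains_consec t p -> size p <= size t.
Proof. by case/existsP=> i /andP[/(leq_trans (leq_addl _ _))]. Qed.

Lemma cyc_contains_size n (s : 'S_n) (p : seq nat) :
  cyc_contains s p -> size p <= n.
Proof.
by case/existsP=> r /andP[_ /contains_consec_size]; rewrite size_oneline.
Qed.

Definition prefix_iso (t p : seq nat) : Prop :=
  forall a b, a < size p -> b < size p ->
    (nth 0 t a < nth 0 t b) = (nth 0 p a < nth 0 p b).

Lemma contains_consec_prefix (t p : seq nat) :
  size p <= size t -> prefix_iso t p -> contains_consec t p.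
Proof.
move=> le_pt iso; apply/existsP; exists ord0; rewrite /= add0n le_pt.
by apply/forallP=> a; apply/forallP=> b; rewrite !add0n iso.
Qed.

Lemma perm_le2_eq n (s t : 'S_n) (i : 'I_n) : n <= 2 -> s i = t i -> s = t.
Proof.
move=> le_n2 e_i; apply/permP=> j; have [-> //|ne_ji] := eqVneq j i.
have ne_s : s j != s i :> nat by rewrite val_eqE (inj_eq perm_inj).
have ne_t : t j != t i :> nat by rewrite val_eqE (inj_eq perm_inj).
apply: ord_inj; move: ne_s ne_t; rewrite e_i.
have := ltn_ord (s j); have := ltn_ord (t j); have := ltn_ord (t i); lia.
Qed.

Lemma cyc_class_le2 n (s : 'S_n) : n <= 2 -> cyc_class s = [set: 'S_n].
Proof.
move=> le_n2; apply/setP=> r; rewrite inE; case: n s r le_n2 => [|n] s r le_n2.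
  by rewrite (_ : r = s) ?cyc_class_refl //; apply/permP=> -[].
have [r' r's r'0] := cyc_class_rot s ord0 (r ord0).
by rewrite -(perm_le2_eq le_n2 r'0).
Qed.

Lemma cyc_contains_pinned n (s : 'S_n) (p q : seq nat) (c : nat) (x : 'I_n) :
  3 <= n -> c < 3 -> size p = 3 -> size q = 3 ->
  (forall t0 t1 t2 : nat,
     uniq [:: t0; t1; t2] -> all (fun v => v < n) [:: t0; t1; t2] ->
     nth 0 [:: t0; t1; t2] c = x ->
     prefix_iso [:: t0; t1; t2] p \/ prefix_iso [:: t0; t1; t2] q) ->
  cyc_contains s p || cyc_contains s q.
Proof.
move=> le3n lt_c3 size_p size_q classify.
pose i0 := Ordinal (ltnW (ltnW le3n)); pose i1 := Ordinal (ltnW le3n).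
pose i2 := Ordinal le3n.
have [r rs r_c] := cyc_class_rot s (Ordinal (leq_trans lt_c3 le3n)) x.
pose t := oneline r.
have window a : a < 3 -> nth 0 [:: nth 0 t i0; nth 0 t i1; nth 0 t i2] a = nth 0 t a.
  by case: a => [|[|[|a]]].
have uniq_t : uniq [:: nth 0 t i0; nth 0 t i1; nth 0 t i2].
  by rewrite !nth_oneline /= !inE !val_eqE !(inj_eq perm_inj).
have lt_t : all (fun v => v < n) [:: nth 0 t i0; nth 0 t i1; nth 0 t i2].
  by rewrite !nth_oneline /= !ltn_ord.
have t_c : nth 0 [:: nth 0 t i0; nth 0 t i1; nth 0 t i2] c = x.
  by rewrite window // -[c]/(val (Ordinal (leq_trans lt_c3 le3n))) nth_oneline r_c.
have occurs u : size u = 3 -> prefix_iso [:: nth 0 t i0; nth 0 t i1; nth 0 t i2] u ->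
    cyc_contains s u.
  move=> size_u iso; apply/existsP; exists r; rewrite rs.
  apply: contains_consec_prefix; first by rewrite size_oneline size_u.
  by move=> a b; rewrite size_u => a3 b3; rewrite -iso ?size_u // !window.
by case: (classify _ _ _ uniq_t lt_t t_c) => /occurs-> //; rewrite orbT.
Qed.

Ltac prefix_iso_by_lia :=
  move=> [|[|[|a]]] [|[|[|b]]] //= _ _; apply/idP/idP; lia.

Lemma cyc_contains_six_sets n (s : 'S_n) (Pi : seq (seq nat)) :
  3 <= n -> Pi \in six_sets -> has (cyc_contains s) Pi.
Proof.
move=> le3n; have lt_pred : n.-1 < n by rewrite ltn_predL ltnW // ltnW.
pose mn := Ordinal (ltnW (ltnW le3n)); pose mx := Ordinal lt_pred.
rewrite !inE => /orP[|/orP[|/orP[|/orP[|/orP[]]]]] /eqP-> /=; rewrite orbF.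
- apply: (@cyc_contains_pinned _ _ _ _ 0 mn) => // t0 t1 t2 /=.
  by rewrite !inE => *; case: (ltnP t1 t2) => ?; [left | right]; prefix_iso_by_lia.
- apply: (@cyc_contains_pinned _ _ _ _ 2 mx) => // t0 t1 t2 /=.
  by rewrite !inE => *; case: (ltnP t0 t1) => ?; [left | right]; prefix_iso_by_lia.
- apply: (@cyc_contains_pinned _ _ _ _ 2 mn) => // t0 t1 t2 /=.
  by rewrite !inE => *; case: (ltnP t1 t0) => ?; [left | right]; prefix_iso_by_lia.
- apply: (@cyc_contains_pinned _ _ _ _ 0 mx) => // t0 t1 t2 /=.
  by rewrite !inE => *; case: (ltnP t2 t1) => ?; [left | right]; prefix_iso_by_lia.
- apply: (@cyc_contains_pinned _ _ _ _ 1 mx) => // t0 t1 t2 /=.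
  by rewrite !inE => *; case: (ltnP t0 t2) => ?; [left | right]; prefix_iso_by_lia.
- apply: (@cyc_contains_pinned _ _ _ _ 1 mn) => // t0 t1 t2 /=.
  by rewrite !inE => *; case: (ltnP t0 t2) => ?; [left | right]; prefix_iso_by_lia.
Qed.

Lemma six_sets_size (Pi : seq (seq nat)) (p : seq nat) :
  Pi \in six_sets -> p \in Pi -> size p = 3.
Proof.
have sizes : all (all (fun p => size p == 3)) six_sets by [].
by move=> /(allP sizes)/allP/[apply]/eqP.
Qed.

Theorem proposition4p1 (Pi : seq (seq nat)) (hPi : Pi \in six_sets) (n : nat) :
  #|Av n Pi| = (if n <= 2 then 1 else 0).
Proof.
rewrite /Av; case: leqP => [le_n2 | lt2n].
- have -> : [set s : 'S_n | all (fun p => ~~ cyc_contains s p) Pi] = setT.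
    apply/setP=> s; rewrite !inE; apply/allP=> p /(six_sets_size hPi) size_p.
    by apply/negP=> /cyc_contains_size; rewrite size_p; lia.
  have -> : [set cyc_class s | s in [set: 'S_n]] = [set [set: 'S_n]].
    apply/setP=> C; apply/imsetP/set1P=> [[s _ ->] | ->]; first exact: cyc_class_le2.
    by exists 1%g; rewrite ?cyc_class_le2.
  by rewrite cards1.
- have -> : [set s : 'S_n | all (fun p => ~~ cyc_contains s p) Pi] = set0.
    apply/setP=> s; rewrite !inE; apply/negbTE/allPn.
    have /hasP[p pPi sp] := cyc_contains_six_sets s lt2n hPi.
    by exists p; rewrite ?negbK.
  by rewrite imset0 cards0.
Qed.
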